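(* Let $G$ be a subcubic graph with $\mathrm{mad}(G)<\frac{20}{9}$ that has no good coloring, chosen with $|V(G)|+|E(G)|$ minimum among all such graphs. Then $G$ contains no $4$-thread, i.e. no path on four vertices all of which have degree $2$ in $G$.
   Context: Graphs are simple; subcubic means maximum degree at most $3$; $\mathrm{mad}(G)=\max\{2|E(H)|/|V(H)|: H\subseteq G\}$. A $k$-thread is a path on $k$ vertices each of degree $2$ in $G$. A $(1^2,2^2)$-packing edge-coloring is an assignment of colors $1_a,1_b,2_a,2_b$ to the edges such that each of the color classes $1_a,1_b$ is a matching and each of $2_a,2_b$ is an induced matching (any two edges of that color are at distance at least $3$ in the line graph). A good coloring is a $(1^2,2^2)$-packing edge-coloring that additionally satisfies: (I) an edge colored $2_a$ and an edge colored $2_b$ never share an endpoint; (II) if $e_1=u_1u_2$ and $e_2=v_1v_2$ share no endpoint and are colored $2_a$ and $2_b$ respectively, then there is no vertex $w$ such that $u_iwv_j$ is a path in $G$ for some $i,j\in\{1,2\}$. *)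

From HB Require Import structures.
From mathcomp Require Import all_boot all_order all_algebra.
Set Implicit Arguments. Unset Strict Implicit. Unset Printing Implicit Defensive.
Import Order.TTheory GRing.Theory Num.Theory.

Section Graphs.
Variable T : finType.
Variable e : rel T.

Definition simple_graph : Prop := symmetric e /\ irreflexive e.

Definition edges : {set {set T}} := [set f : {set T} | [exists x, exists y, e x y && (f == [set x; y])]].

Definition deg (x : T) : nat := #|[set y | e x y]|.

Definition subcubic : Prop := forall x, deg x <= 3.

(* maximum average degree: max over subgraphs H=(S,F) of 2|F|/|S|
   (the empty subgraph contributes 0, as x/0 = 0 in rat) *)
Definition mad : rat :=
  \big[Num.max/0%R]_(S : {set T})
    \big[Num.max/0%R]_(F : {set {set T}} | F \subset edges :&: [set f : {set T} | f \subset S])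
       (((2 * #|F|)%:R : rat) / (#|S|%:R))%R.

Definition share (f g : {set T}) : Prop := exists x, x \in f /\ x \in g.

Definition joined (f g : {set T}) : Prop :=
  exists u v, [/\ u \in f, v \in g & e u v].

Definition common_nbr (f g : {set T}) : Prop :=
  exists u v w, [/\ u \in f, v \in g, e u w & e w v].

End Graphs.

Inductive color := C1a | C1b | C2a | C2b.

Section Coloring.
Variable T : finType.
Variable e : rel T.
Variable c : {set T} -> color.

Definition matching_class (k : color) : Prop :=
  forall f g, f \in edges e -> g \in edges e -> f != g ->
    c f = k -> c g = k -> ~ share f g.

Definition induced_matching_class (k : color) : Prop :=
  forall f g, f \in edges e -> g \in edges e -> f != g ->
    c f = k -> c g = k -> ~ share f g /\ ~ joined e f g.

Definition packing_coloring : Prop :=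
  [/\ matching_class C1a, matching_class C1b,
      induced_matching_class C2a & induced_matching_class C2b].

Definition good_coloring : Prop :=
  [/\ packing_coloring,
      (forall f g, f \in edges e -> g \in edges e ->
         c f = C2a -> c g = C2b -> ~ share f g)
    &
      (forall f g, f \in edges e -> g \in edges e ->
         c f = C2a -> c g = C2b -> ~ share f g -> ~ common_nbr e f g)].

End Coloring.

Definition has_good_coloring (T : finType) (e : rel T) : Prop :=
  exists c : {set T} -> color, good_coloring e c.

(* Let x a b c d y be the 4-thread together with the outer neighbours x of a and y of d.
   Deleting the three edges at b and c leaves a smaller subcubic graph of no larger mad,
   which by minimality has a good coloring phi; we extend it.  If a type-1 color differs
   from phi(ax) and phi(dy), it goes on ab and cd and the other type-1 color on bc.
   Otherwise phi(ax) and phi(dy) are 1a and 1b, placed on cd and ab respectively, and bc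
   gets a type-2 color t: bc is at distance two from the edges at x and y, which only
   forbids the other type-2 color there.  The color t exists after a Kempe-type swap of
   2a and 2b on a class of mutually near type-2 edges, which makes all type-2 edges at x
   or y equally colored. *)

From HB Require Import structures.
From mathcomp Require Import all_boot all_order all_algebra.
Import Order.TTheory GRing.Theory Num.Theory.
From Stdlib Require Import Classical_Prop.
Set Implicit Arguments. Unset Strict Implicit. Unset Printing Implicit Defensive.

Definition type2 (k : color) : bool := match k with C2a | C2b => true | _ => false end.

Definition swap2 (k : color) : color :=
  match k with C2a => C2b | C2b => C2a | k => k end.

Definition flip1 (k : color) : color := if k is C1a then C1b else C1a.

Lemma swap2K : involutive swap2. Proof. by case. Qed.
Lemma type2_swap2 k : type2 (swap2 k) = type2 k. Proof. by case: k. Qed.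
Lemma swap2_id k : ~~ type2 k -> swap2 k = k. Proof. by case: k. Qed.
Lemma type2_neq k1 k2 : type2 k1 -> type2 k2 -> k1 <> k2 -> k1 = swap2 k2.
Proof. by case: k1; case: k2. Qed.
Lemma color_dec (k1 k2 : color) : k1 = k2 \/ k1 <> k2.
Proof. by case: k1; case: k2; (by left) || by right. Qed.

Lemma set2_neq (T : finType) (u v p q : T) : u \notin [set p; q] -> [set u; v] != [set p; q].
Proof. by apply: contraNneq => <-; rewrite !inE eqxx. Qed.

Section Graph.
Variables (T : finType) (e : rel T).

Lemma share_sym (f g : {set T}) : share f g -> share g f.
Proof. by case=> z [? ?]; exists z. Qed.

Lemma edgesP f : reflect (exists u v, e u v /\ f = [set u; v]) (f \in edges e).
Proof.
rewrite inE; apply: (iffP existsP) => [[u /existsP[v /andP[euv /eqP ->]]]|[u [v [euv ->]]]].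
  by exists u, v.
by exists u; apply/existsP; exists v; rewrite euv eqxx.
Qed.

Lemma in_edges u v : e u v -> [set u; v] \in edges e.
Proof. by move=> euv; apply/edgesP; exists u, v. Qed.

Lemma deg_mono (e' : rel T) z : subrel e' e -> deg e' z <= deg e z.
Proof. by move=> sub; apply/subset_leq_card/subsetP => w; rewrite !inE; apply: sub. Qed.

Lemma mad_mono (e' : rel T) : edges e' \subset edges e -> (mad e' <= mad e)%R.
Proof.
move=> sub; apply: le_bigmax2 => S _; apply: bigmax_le => [|F hF].
  by elim/big_ind: _ => // [u v hu hv|F _]; rewrite ?le_max ?hu // divr_ge0 ?ler0n.
by apply: (bigmax_sup F) => //; apply: subset_trans hF (setSI _ sub).
Qed.

Lemma deg2_nbrs v p q : deg e v = 2 -> e v p -> e v q -> p != q ->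
  forall z, e v z -> z = p \/ z = q.
Proof.
move=> dv evp evq npq z evz.
have E : [set p; q] = [set y | e v y].
  apply/eqP; rewrite eqEcard cards2 npq -[#|[set y | e v y]|]/(deg e v) dv leqnn andbT.
  by apply/subsetP => w /set2P[] ->; rewrite inE.
by apply/set2P; rewrite E inE.
Qed.

Lemma deg2_other v p : deg e v = 2 -> e v p -> exists2 q, q != p & e v q.
Proof.
move=> /eqP/cards2P[u1 [u2 [n12 E]]] evp.
have nbr w : (w \in [set u1; u2]) = e v w by rewrite -E inE.
have := evp; rewrite -nbr => /set2P[] ->.
  by exists u2; rewrite 1?eq_sym // -nbr !inE eqxx orbT.
by exists u1; rewrite // -nbr !inE eqxx.
Qed.

Hypothesis sym_e : symmetric e.

Lemma edge_at v p q f : (forall z, e v z -> z = p \/ z = q) -> f \in edges e -> v \in f ->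
  f = [set v; p] \/ f = [set v; q].
Proof.
move=> Nv /edgesP[u [w [euw ->]]] /set2P[] vE; subst v; first by case: (Nv _ euw) => ->; tauto.
by rewrite sym_e in euw; case: (Nv _ euw) => ->; rewrite setUC; tauto.
Qed.

Lemma joined_sym f g : joined e f g -> joined e g f.
Proof. by case=> u [v [? ? ?]]; exists v, u; rewrite sym_e. Qed.

Lemma common_nbr_sym f g : common_nbr e f g -> common_nbr e g f.
Proof. by case=> u [v [w [? ? ? ?]]]; exists v, u, w; split; rewrite // sym_e. Qed.

Lemma joined_common_nbr f g : g \in edges e -> joined e f g -> common_nbr e f g.
Proof.
case/edgesP=> p [q [epq ->]] [u [v [uf /set2P[] -> euv]]].
  by exists u, q, p; rewrite !inE eqxx orbT.
by exists u, p, q; split=> //; [rewrite !inE eqxx | rewrite sym_e].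
Qed.

Definition matching1 (c : {set T} -> color) : Prop := forall f g,
  f \in edges e -> g \in edges e -> f != g -> ~~ type2 (c f) -> c f = c g -> ~ share f g.

(* Equal type-2 colors: the induced matching condition; distinct ones: (I) and (II). *)
Definition compat2 (c : {set T} -> color) (f g : {set T}) : Prop :=
  [/\ ~ share f g, (c f = c g -> ~ joined e f g) & (c f <> c g -> ~ common_nbr e f g)].

Definition packing2 (c : {set T} -> color) : Prop := forall f g,
  f \in edges e -> g \in edges e -> f != g -> type2 (c f) -> type2 (c g) -> compat2 c f g.

Lemma compat2_sym c f g : compat2 c f g -> compat2 c g f.
Proof.
case=> ns nj ncn; split.
- by move/share_sym.
- by move=> E /joined_sym; apply: nj.
- by move=> E /common_nbr_sym; apply: ncn => E'; apply: E.
Qed.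

Lemma good_coloringP c : good_coloring e c <-> matching1 c /\ packing2 c.
Proof.
split=> [[[m1a m1b i2a i2b] hI hII]|[H1 H2]].
  split=> f g fe ge fg.
    by case E: (c f) => // _ E'; [apply: (m1a f g) | apply: (m1b f g)]; rewrite -?E'.
  case Ef: (c f) => //; case Eg: (c g) => // _ _; rewrite /compat2 Ef Eg.
  - by have [? ?] := i2a f g fe ge fg Ef Eg.
  - by have ns := hI f g fe ge Ef Eg; split=> // _; apply: hII.
  - have ns := hI g f ge fe Eg Ef; split=> [/share_sym //|//|_ /common_nbr_sym].
    exact: hII.
  - by have [? ?] := i2b f g fe ge fg Ef Eg.
have fg f g : c f = C2a -> c g = C2b -> f != g by move=> Ef Eg; apply/eqP=> E; congruence.
split; first split.
- by move=> f g fe ge ne Ef Eg; apply: H1; rewrite ?Ef ?Eg.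
- by move=> f g fe ge ne Ef Eg; apply: H1; rewrite ?Ef ?Eg.
- move=> f g fe ge ne Ef Eg; have [] := H2 f g fe ge ne; rewrite ?Ef ?Eg //.
  by move=> ns nj _; split=> //; apply: nj.
- move=> f g fe ge ne Ef Eg; have [] := H2 f g fe ge ne; rewrite ?Ef ?Eg //.
  by move=> ns nj _; split=> //; apply: nj.
- by move=> f g fe ge Ef Eg; have [] := H2 f g fe ge (fg f g Ef Eg); rewrite ?Ef ?Eg.
- move=> f g fe ge Ef Eg _; have [] := H2 f g fe ge (fg f g Ef Eg); rewrite ?Ef ?Eg //.
  by move=> _ _; apply.
Qed.

Definition near (f g : {set T}) : bool :=
  [exists u in f, exists v in g, [|| u == v, e u v | [exists w, e u w && e w v]]].

Lemma near_sym f g : near f g = near g f.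
Proof.
suff imp f' g' : near f' g' -> near g' f' by apply/idP/idP; apply: imp.
case/exists_inP=> u uf /exists_inP[v vg /or3P near_uv].
apply/exists_inP; exists v => //; apply/exists_inP; exists u => //.
case: near_uv => [/eqP->|euv|/existsP[w /andP[euw ewv]]]; rewrite ?eqxx //.
  by rewrite sym_e euv orbT.
by apply/or3P/Or33/existsP; exists w; rewrite sym_e ewv sym_e euw.
Qed.

Lemma nearW f g : share f g \/ joined e f g \/ common_nbr e f g -> near f g.
Proof.
case=> [[z [zf zg]]|[[u [v [uf vg euv]]]|[u [v [w [uf vg euw ewv]]]]]];
  apply/exists_inP.
- by exists z => //; apply/exists_inP; exists z; rewrite ?eqxx.
- by exists u => //; apply/exists_inP; exists v; rewrite ?euv ?orbT.
- exists u => //; apply/exists_inP; exists v => //.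
  by apply/or3P/Or33/existsP; exists w; rewrite euw ewv.
Qed.

Lemma near_edge f g : g \in edges e -> near f g -> share f g \/ common_nbr e f g.
Proof.
move=> ge /exists_inP[u uf /exists_inP[v vg /or3P[/eqP uv|euv|/existsP[w /andP[euw ewv]]]]].
- by left; exists u; rewrite -uv in vg.
- by right; apply: joined_common_nbr => //; exists u, v.
- by right; exists u, v, w.
Qed.

Lemma share_type2 phi f g : packing2 phi -> f \in edges e -> g \in edges e -> f != g ->
  type2 (phi f) -> type2 (phi g) -> ~ share f g.
Proof. by move=> H2 fe ge fg pf pg; case: (H2 f g fe ge fg pf pg). Qed.

(* Type-2 edges of distinct colors are never near, so a chain is monochromatic and
   swapping 2a and 2b on it keeps the coloring good. *)
Section Kempe.
Variables (phi : {set T} -> color) (g0 : {set T}).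
Hypothesis H2 : packing2 phi.

Definition near2 : rel {set T} := fun f g =>
  [&& f \in edges e, g \in edges e, type2 (phi f), type2 (phi g) & near f g].

Definition kempe_chain : {set {set T}} := [set g | connect near2 g0 g].

Definition kempe_swap (f : {set T}) : color :=
  if f \in kempe_chain then swap2 (phi f) else phi f.

Lemma near2_sym f g : near2 f g = near2 g f.
Proof. by rewrite /near2 near_sym; do !bool_congr. Qed.

Lemma near2_col f g : near2 f g -> phi f = phi g.
Proof.
case/and5P=> fe ge pf pg nfg; have [-> //|fg] := eqVneq f g.
have [//|ne] := color_dec (phi f) (phi g).
have [ns _ /(_ ne) ncn] := H2 fe ge fg pf pg.
by case: (near_edge ge nfg).
Qed.

Lemma kempe_chain_col g : g \in kempe_chain -> phi g = phi g0.
Proof.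
rewrite inE => /connectP[p pth ->] {g}; elim: p g0 pth => //= h p IH f /andP[fh hp].
by rewrite IH // (near2_col fh).
Qed.

Lemma kempe_chain_closed f g : f \in kempe_chain -> near2 f g -> g \in kempe_chain.
Proof. by rewrite !inE => cf /connect1; apply: connect_trans. Qed.

Lemma kempe_swap_id f : ~~ type2 (phi f) -> kempe_swap f = phi f.
Proof. by rewrite /kempe_swap; case: ifP => // _; apply: swap2_id. Qed.

Lemma type2_kempe_swap f : type2 (kempe_swap f) = type2 (phi f).
Proof. by rewrite /kempe_swap; case: ifP => // _; rewrite type2_swap2. Qed.

Lemma kempe_swap_matching1 : matching1 phi -> matching1 kempe_swap.
Proof.
move=> H1 f g fe ge fg; rewrite type2_kempe_swap => pf E.
have pg : ~~ type2 (phi g) by rewrite -type2_kempe_swap -E type2_kempe_swap.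
by apply: H1; rewrite // -kempe_swap_id // E kempe_swap_id.
Qed.

Lemma kempe_swap_packing2 : packing2 kempe_swap.
Proof.
move=> f g fe ge fg; rewrite !type2_kempe_swap => pf pg.
have [ns nj ncn] := H2 fe ge fg pf pg.
have far c : ~~ near2 f g -> compat2 c f g.
  rewrite /near2 fe ge pf pg => /negP nfg.
  by split=> [|_|_] h; apply/nfg/nearW; tauto.
case fS: (f \in kempe_chain); case gS: (g \in kempe_chain).
- rewrite /compat2 /kempe_swap fS gS.
  split=> // [/(inv_inj swap2K)|ne]; first exact: nj.
  by apply: ncn => E; apply: ne; rewrite E.
- by apply: far; apply: contraFN gS; apply: kempe_chain_closed.
- by apply: far; rewrite near2_sym; apply: contraFN fS; apply: kempe_chain_closed.
- by rewrite /compat2 /kempe_swap fS gS.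
Qed.

End Kempe.

Definition mono2_at (psi : {set T} -> color) (x y : T) : Prop :=
  exists2 t, type2 t & forall g, g \in edges e -> (x \in g) || (y \in g) ->
    type2 (psi g) -> psi g = t.

Lemma mono2_recolor phi x y : matching1 phi -> packing2 phi ->
  exists psi, [/\ matching1 psi, packing2 psi,
    (forall f, ~~ type2 (phi f) -> psi f = phi f) & mono2_at psi x y].
Proof.
move=> H1 H2; pose used k := exists g, [/\ g \in edges e, (x \in g) || (y \in g) & phi g = k].
have keep t : type2 t -> ~ used (swap2 t) -> mono2_at phi x y.
  move=> pt nu; exists t => // g ge tg pg.
  by rewrite -[t]swap2K; apply: type2_neq; rewrite ?type2_swap2 // => E; apply: nu; exists g.
have [[ga [gae ta Ea]]|] := classic (used C2a); last by exists phi; split=> //; apply: (keep C2b).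
have [[gb [gbe tb Eb]]|] := classic (used C2b); last by exists phi; split=> //; apply: (keep C2a).
exists (kempe_swap phi ga); split.
- exact: kempe_swap_matching1.
- exact: kempe_swap_packing2.
- exact: kempe_swap_id.
exists C2b => // g ge tg; rewrite type2_kempe_swap /kempe_swap.
case: ifP => [gS _|gS pg]; first by rewrite (kempe_chain_col H2 gS) Ea.
have [->|ggb] := eqVneq g gb; first by [].
have gga : g != ga by apply: contraFneq gS => ->; rewrite inE connect0.
have gab : ga != gb by apply/eqP => E; move: Eb; rewrite -E Ea.
have nab : ~ share ga gb by apply: (share_type2 H2 gae gbe gab); rewrite ?Ea ?Eb.
exfalso; have : share g ga \/ share g gb.
  by case/orP: tg => zg; case/orP: ta => za; case/orP: tb => zb;
    solve [by left; exists x | by left; exists y | by right; exists x | by right; exists y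
          | by case: nab; exists x | by case: nab; exists y].
by case=> sh; [apply: (share_type2 H2 ge gae gga) | apply: (share_type2 H2 ge gbe ggb)];
  rewrite ?Ea ?Eb.
Qed.

End Graph.

Section Isolate.
Variables (T : finType) (e : rel T) (B : {set T}).

Definition isolate : rel T := fun u v => [&& e u v, u \notin B & v \notin B].

Lemma isolate_sub : subrel isolate e.
Proof. by move=> u v /and3P[]. Qed.

Lemma edges_isolate f : (f \in edges isolate) = (f \in edges e) && [disjoint f & B].
Proof.
apply/edgesP/andP => [[u [v [/and3P[euv uB vB] ->]]]|[/edgesP[u [v [euv ->]]]]].
  by rewrite in_edges // disjoints_subset subUset !sub1set !inE uB.
rewrite disjoints_subset subUset !sub1set !inE => /andP[uB vB].
by exists u, v; rewrite /isolate euv uB.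
Qed.

Lemma edges_isolate_sub : edges isolate \subset edges e.
Proof. by apply/subsetP => f; rewrite edges_isolate => /andP[]. Qed.

Lemma isolate_sym : symmetric e -> symmetric isolate.
Proof. by move=> sym_e u v; rewrite /isolate sym_e [(u \notin B) && _]andbC. Qed.

Lemma simple_isolate : simple_graph e -> simple_graph isolate.
Proof. by case=> sym_e irr_e; split=> [|u]; [apply: isolate_sym | rewrite /isolate irr_e]. Qed.

Lemma subcubic_isolate : subcubic e -> subcubic isolate.
Proof. by move=> sub3 z; apply: leq_trans (sub3 z); apply/deg_mono/isolate_sub. Qed.

Lemma mad_isolate : (mad isolate <= mad e)%R.
Proof. exact/mad_mono/edges_isolate_sub. Qed.

End Isolate.

Section Thread.
Variables (T : finType) (e : rel T) (x a b c d y : T).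
Hypotheses (sym_e : symmetric e) (ebc : e b c) (eax : e a x) (edy : e d y).
Hypotheses (nab : a != b) (nac : a != c) (nad : a != d) (nbc : b != c) (nbd : b != d)
  (ncd : c != d) (nxb : x != b) (nyc : y != c).
Hypotheses (Na : forall z, e a z -> z = x \/ z = b) (Nb : forall z, e b z -> z = a \/ z = c)
  (Nc : forall z, e c z -> z = b \/ z = d) (Nd : forall z, e d z -> z = c \/ z = y).

(* As b and c have degree 2, this deletes exactly ab, bc and cd. *)
Local Notation e0 := (isolate e [set b; c]).
Local Notation Eab := [set a; b].
Local Notation Ebc := [set b; c].
Local Notation Ecd := [set c; d].
Local Notation Exa := [set a; x].
Local Notation Edy := [set d; y].

Lemma old_edge f : f \in edges e0 -> [/\ f \in edges e, b \notin f & c \notin f].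
Proof.
rewrite edges_isolate => /andP[fe dis].
by rewrite fe !(disjointFl dis) // !inE eqxx ?orbT.
Qed.

Lemma edges_thread f : f \in edges e -> f \in edges e0 \/ [\/ f = Eab, f = Ebc | f = Ecd].
Proof.
move=> fe; rewrite edges_isolate fe /=.
have [|] := boolP [disjoint f & [set b; c]]; first by left.
case/pred0Pn => z /andP[zf /set2P[] zE]; subst z; right.
- by case: (edge_at sym_e Nb fe zf) => ->; [constructor 1; apply: setUC | constructor 2].
- by case: (edge_at sym_e Nc fe zf) => ->; [constructor 2; apply: setUC | constructor 3].
Qed.

Lemma Exa_old : Exa \in edges e0.
Proof.
have ncx : x != c.
  apply/eqP => E; move: eax; rewrite E sym_e.
  by case/Nc => /eqP; rewrite ?(negbTE nab) ?(negbTE nad).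
rewrite edges_isolate in_edges // disjoints_subset subUset !sub1set !inE !negb_or.
by rewrite nab nac nxb ncx.
Qed.

Lemma Edy_old : Edy \in edges e0.
Proof.
have nyb : y != b.
  apply/eqP => E; move: edy; rewrite E sym_e.
  by case/Nb => /eqP; rewrite eq_sym ?(negbTE nad) ?(negbTE ncd).
rewrite edges_isolate in_edges // disjoints_subset subUset !sub1set !inE !negb_or.
by rewrite ![d == _]eq_sym nbd ncd nyb nyc.
Qed.

Lemma old_at_a g : g \in edges e0 -> a \in g -> g = Exa.
Proof.
case/old_edge=> ge bg _ ag; case: (edge_at sym_e Na ge ag) => // E.
by rewrite E !inE eqxx orbT in bg.
Qed.

Lemma old_at_d g : g \in edges e0 -> d \in g -> g = Edy.
Proof.
case/old_edge=> ge _ cg dg; case: (edge_at sym_e Nd ge dg) => // E.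
by rewrite E !inE eqxx orbT in cg.
Qed.

Lemma joined_old f g : f \in edges e0 -> g \in edges e0 -> joined e f g -> joined e0 f g.
Proof.
case/old_edge=> _ bf cf /old_edge[_ bg cg] [u [v [uf vg euv]]]; exists u, v; split=> //.
by rewrite /isolate euv !inE !negb_or (memPn bf u) ?(memPn cf u) ?(memPn bg v) ?(memPn cg v).
Qed.

(* A middle vertex b (resp. c) would force both ends to be a (resp. d). *)
Lemma common_nbr_old f g : f \in edges e0 -> g \in edges e0 -> ~ share f g ->
  common_nbr e f g -> common_nbr e0 f g.
Proof.
case/old_edge=> _ bf cf /old_edge[_ bg cg] nsh [u [v [w [uf vg euw ewv]]]].
have [ub uc] := (memPn bf u uf, memPn cf u uf).
have [vb vc] := (memPn bg v vg, memPn cg v vg).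
have [wb wc] : w != b /\ w != c.
  split; apply/eqP => wE; subst w; rewrite sym_e in euw.
  - case: (Nb euw) (Nb ewv) => uE [] vE; subst u v; rewrite ?eqxx // in uc vc.
    by case: nsh; exists a.
  - case: (Nc euw) (Nc ewv) => uE [] vE; subst u v; rewrite ?eqxx // in ub vb.
    by case: nsh; exists d.
by exists u, v, w; rewrite /isolate euw ewv !inE !negb_or ub uc vb vc wb wc.
Qed.

Lemma bc_far g : g \in edges e0 -> a \notin g -> d \notin g ->
  ~ joined e Ebc g /\ (common_nbr e Ebc g -> (x \in g) || (y \in g)).
Proof.
case/old_edge=> _ bg cg ag dg; split.
  case=> u [v [/set2P[] -> vg euv]].
  - by case: (Nb euv) => vE; subst v; rewrite vg in ag cg.
  - by case: (Nc euv) => vE; subst v; rewrite vg in bg dg.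
case=> u [v [w [/set2P[] -> vg euw ewv]]].
- case: (Nb euw) => wE; subst w.
  + by case: (Na ewv) => vE; subst v; rewrite vg ?orbT in bg *.
  + by case: (Nc ewv) => vE; subst v; rewrite vg in bg dg.
- case: (Nc euw) => wE; subst w.
  + by case: (Nb ewv) => vE; subst v; rewrite vg in ag cg.
  + by case: (Nd ewv) => vE; subst v; rewrite vg ?orbT in cg *.
Qed.

Definition thread_col (phi : {set T} -> color) (k1 k2 k3 : color) (f : {set T}) : color :=
  if f == Eab then k1 else if f == Ebc then k2 else if f == Ecd then k3 else phi f.

Section Extension.
Variables (phi : {set T} -> color) (k1 k2 k3 : color).
Local Notation C := (thread_col phi k1 k2 k3).

Lemma thread_col_ab : C Eab = k1.
Proof. by rewrite /thread_col eqxx. Qed.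

Lemma thread_col_bc : C Ebc = k2.
Proof. by rewrite /thread_col eq_sym (negbTE (set2_neq _ _)) ?eqxx // !inE negb_or nab. Qed.

Lemma thread_col_cd : C Ecd = k3.
Proof.
rewrite /thread_col eq_sym (negbTE (set2_neq _ _)) ?eqxx ?inE ?negb_or ?nac ?nad //.
by rewrite eq_sym (negbTE (set2_neq _ _)) // !inE negb_or nbc.
Qed.

Lemma thread_col_old f : f \in edges e0 -> C f = phi f.
Proof.
case/old_edge=> _ bf cf; rewrite /thread_col.
by rewrite !ifN //; [apply: contraNneq cf | apply: contraNneq bf | apply: contraNneq bf];
  move=> ->; rewrite !inE eqxx ?orbT.
Qed.

Hypotheses (n1x : k1 <> phi Exa) (n12 : k1 <> k2) (n32 : k3 <> k2) (n3y : k3 <> phi Edy).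

Lemma thread_col_share f g : [\/ f = Eab, f = Ebc | f = Ecd] -> g \in edges e -> f != g ->
  share f g -> C f <> C g.
Proof.
move=> hf ge fg [z [zf zg]]; have at_z := fun v p q Nv => @edge_at _ _ sym_e v p q g Nv ge.
case: hf zf fg => -> /set2P[] zE; subst z;
  [ case: (at_z _ _ _ Na zg) | case: (at_z _ _ _ Nb zg) | case: (at_z _ _ _ Nb zg)
  | case: (at_z _ _ _ Nc zg) | case: (at_z _ _ _ Nc zg) | case: (at_z _ _ _ Nd zg) ] => ->;
  rewrite ?[[set b; a]]setUC ?[[set c; b]]setUC ?[[set d; c]]setUC ?eqxx //= => _;
  rewrite ?thread_col_ab ?thread_col_bc ?thread_col_cd ?thread_col_old ?Exa_old ?Edy_old //;
  by move=> /esym.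
Qed.

Lemma thread_col_matching1 : matching1 e0 phi -> matching1 e C.
Proof.
move=> H1 f g fe ge fg nf E sh.
case: (edges_thread fe) => [fo|hf]; last exact: (thread_col_share hf ge fg sh E).
case: (edges_thread ge) => [go|hg]; last first.
  by apply: (thread_col_share hg fe _ (share_sym sh) (esym E)); rewrite eq_sym.
by apply: (H1 f g) => //; rewrite -(thread_col_old fo) -?(thread_col_old go).
Qed.

Hypotheses (t1 : ~~ type2 k1) (t3 : ~~ type2 k3).
Hypothesis h2 : type2 k2 -> [/\ ~~ type2 (phi Exa), ~~ type2 (phi Edy) &
  forall g, g \in edges e0 -> (x \in g) || (y \in g) -> type2 (phi g) -> phi g = k2].

Lemma bc_compat2 g : g \in edges e0 -> type2 (phi g) -> type2 k2 -> compat2 e C Ebc g.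
Proof.
move=> go pg p2; have [tx ty mono] := h2 p2.
have ag : a \notin g by apply: contraL pg => /(old_at_a go) ->.
have dg : d \notin g by apply: contraL pg => /(old_at_d go) ->.
have [nj cn] := bc_far go ag dg; have [_ bg cg] := old_edge go.
rewrite /compat2 thread_col_bc (thread_col_old go); split=> //.
  by case=> z [/set2P[] -> zg]; rewrite zg in bg cg.
by move=> ne /cn/(mono g go)/(_ pg)/esym.
Qed.

Lemma thread_col_packing2 : packing2 e0 phi -> packing2 e C.
Proof.
move=> H2 f g fe ge fg pf pg.
have type2_edge h : h \in edges e -> type2 (C h) -> h \in edges e0 \/ h = Ebc.
  case/edges_thread => [|[]->]; rewrite ?thread_col_ab ?thread_col_cd;
    by [left | right | rewrite (negbTE t1) | rewrite (negbTE t3)].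
case: (type2_edge f fe pf) => [fo|fE]; case: (type2_edge g ge pg) => [go|gE]; subst.
- rewrite (thread_col_old fo) (thread_col_old go) in pf pg.
  have [ns nj ncn] := H2 f g fo go fg pf pg.
  rewrite /compat2 (thread_col_old fo) (thread_col_old go); split=> //.
    by move=> E /(joined_old fo go); apply: nj.
  by move=> ne /(common_nbr_old fo go ns); apply: ncn.
- rewrite thread_col_bc in pg; rewrite (thread_col_old fo) in pf.
  by apply: (compat2_sym sym_e); apply: bc_compat2.
- rewrite thread_col_bc in pf; rewrite (thread_col_old go) in pg.
  exact: bc_compat2.
- by rewrite eqxx in fg.
Qed.

End Extension.

Lemma card_edges_thread : #|edges e0| < #|edges e|.
Proof.
apply/proper_card/properP; split; first exact: edges_isolate_sub.
exists Ebc; first exact: in_edges.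
by rewrite edges_isolate in_edges // disjoints_subset subUset !sub1set !inE eqxx.
Qed.

Lemma thread_extend : has_good_coloring e0 -> has_good_coloring e.
Proof.
have sym_e0 : symmetric e0 by apply: isolate_sym.
case=> phi /(good_coloringP sym_e0) [H1 H2].
have [[k [tk kx ky]]|[tx ty nxy]] : (exists k, [/\ ~~ type2 k, k <> phi Exa & k <> phi Edy]) \/
    [/\ ~~ type2 (phi Exa), ~~ type2 (phi Edy) & phi Exa <> phi Edy].
  by case: (phi Exa); case: (phi Edy); solve [by right | by left; exists C1a | by left; exists C1b].
- exists (thread_col phi k (flip1 k) k); apply/good_coloringP => //; split.
    by apply: thread_col_matching1 => //; case: (k) tk.
  by apply: thread_col_packing2 => //; case: (k) tk.
- have [psi [H1' H2' same [t tt mono]]] := mono2_recolor sym_e0 x y H1 H2.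
  have [sx sy] := (same _ tx, same _ ty).
  exists (thread_col psi (phi Edy) t (phi Exa)); apply/good_coloringP => //; split.
    apply: thread_col_matching1 => //; rewrite ?sx ?sy // => E;
      by [apply: nxy | move: tx; rewrite E tt | move: ty; rewrite E tt].
  apply: thread_col_packing2 => // _; rewrite sx sy; split=> // g go tg; exact: mono.
Qed.

End Thread.


Theorem lemma7 (T : finType) (e : rel T)
  (Hsimple : simple_graph e) (Hsub : subcubic e)
  (Hmad : (mad e < 20%:R / 9%:R)%R)
  (Hbad : ~ has_good_coloring e)
  (Hmin : forall (T' : finType) (e' : rel T'),
      simple_graph e' -> subcubic e' -> (mad e' < 20%:R / 9%:R)%R ->
      ~ has_good_coloring e' ->
      #|T| + #|edges e| <= #|T'| + #|edges e'|) :
  ~ exists a b c d : T,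
      [/\ uniq [:: a; b; c; d], e a b, e b c & e c d] /\
      [/\ deg e a = 2, deg e b = 2, deg e c = 2 & deg e d = 2].
Proof.
case=> a [b [c [d [[uniq_abcd eab ebc ecd] [da db dc dd]]]]].
have sym_e : symmetric e by case: Hsimple.
move: uniq_abcd => /and4P[]; rewrite !inE !negb_or => /and3P[nab nac nad] /andP[nbc nbd] ncd _.
have [x nxb eax] := deg2_other da eab.
have edc : e d c by rewrite sym_e.
have [y nyc edy] := deg2_other dd edc.
have ncy : c != y by rewrite eq_sym.
have eba : e b a by rewrite sym_e.
have ecb : e c b by rewrite sym_e.
have Na := deg2_nbrs da eax eab nxb; have Nb := deg2_nbrs db eba ebc nac.
have Nc := deg2_nbrs dc ecb ecd nbd; have Nd := deg2_nbrs dd edc edy ncy.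
have bad0 : ~ has_good_coloring (isolate e [set b; c]).
  by move/(thread_extend sym_e eax edy nab nac nad nbc nbd ncd nxb nyc Na Nb Nc Nd).
have := Hmin T _ (simple_isolate _ Hsimple) (subcubic_isolate _ Hsub)
  (le_lt_trans (mad_isolate _ _) Hmad) bad0.
by rewrite leq_add2l leqNgt (card_edges_thread ebc).
Qed.
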